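(* Let $V$ be a finite dimensional normed vector space. For every sequence of holonomic spaces $(V,H_i,L_i)$ there is a subsequence for which the metrics $d_{L_i}:V\times V\to\mathbb{R}$ converge uniformly on bounded subsets of $V\times V$ to a semi-metric $\rho:V\times V\to\mathbb{R}$.
   Context: $O(V)$ denotes the group of norm-preserving linear maps of $V$. A group-norm on a group $H$ is $L:H\to\mathbb{R}$ with $L(a)\ge0$, $L(a)=0$ iff $a=e$, $L(a^{-1})=L(a)$, $L(ab)\le L(a)+L(b)$. A holonomic space is a triple $(V,H,L)$ with $V$ a normed vector space, $H\le O(V)$, $L$ a group-norm on $H$, such that for every $u\in V$ there is $R>0$ with $\|v-w\|^2-\|av-w\|^2\le L(a)^2$ for all $a\in H$ and all $v,w$ with $\|u-v\|,\|u-w\|<R$. Its holonomic metric is $d_L(u,v)=\inf_{a\in H}\sqrt{L(a)^2+\|au-v\|^2}$ (a metric on $V$). A semi-metric is a symmetric nonnegative function vanishing on the diagonal and satisfying the triangle inequality. *)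

From Stdlib Require Import Reals Classical ClassicalEpsilon FunctionalExtensionality.
Open Scope R_scope.

(* A finite-dimensional real vector space, modelled as R^n (any finite
   dimensional real space is linearly isomorphic to some R^n; the norm is
   arbitrary). *)
Definition vec (n : nat) : Type := {i : nat | (i < n)%nat} -> R.

Definition vzero {n} : vec n := fun _ => 0.
Definition vadd {n} (u v : vec n) : vec n := fun i => u i + v i.
Definition vsub {n} (u v : vec n) : vec n := fun i => u i - v i.
Definition vscale {n} (c : R) (v : vec n) : vec n := fun i => c * v i.

Definition is_norm {n} (N : vec n -> R) : Prop :=
  (forall v, N v = 0 -> v = vzero) /\
  (forall c v, N (vscale c v) = Rabs c * N v) /\
  (forall u v, N (vadd u v) <= N u + N v).

Definition is_linear {n} (a : vec n -> vec n) : Prop :=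
  (forall u v, a (vadd u v) = vadd (a u) (a v)) /\
  (forall c v, a (vscale c v) = vscale c (a v)).

Definition in_O {n} (N : vec n -> R) (a : vec n -> vec n) : Prop :=
  is_linear a /\ forall v, N (a v) = N v.

Definition idf {n} : vec n -> vec n := fun v => v.
Definition comp {n} (a b : vec n -> vec n) : vec n -> vec n := fun v => a (b v).

Definition is_subgroup_O {n} (N : vec n -> R) (H : (vec n -> vec n) -> Prop) : Prop :=
  (forall a, H a -> in_O N a) /\
  H idf /\
  (forall a b, H a -> H b -> H (comp a b)) /\
  (forall a, H a -> exists b, H b /\ comp a b = idf /\ comp b a = idf).

Definition is_group_norm {n} (H : (vec n -> vec n) -> Prop) (L : (vec n -> vec n) -> R) : Prop :=
  (forall a, H a -> 0 <= L a) /\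
  (forall a, H a -> (L a = 0 <-> a = idf)) /\
  (forall a b, H a -> H b -> comp a b = idf -> comp b a = idf -> L b = L a) /\
  (forall a b, H a -> H b -> L (comp a b) <= L a + L b).

Definition holonomic {n} (N : vec n -> R) (H : (vec n -> vec n) -> Prop)
  (L : (vec n -> vec n) -> R) : Prop :=
  is_norm N /\ is_subgroup_O N H /\ is_group_norm H L /\
  forall u : vec n, exists Rad, 0 < Rad /\
    forall a v w, H a -> N (vsub u v) < Rad -> N (vsub u w) < Rad ->
      N (vsub v w) ^ 2 - N (vsub (a v) w) ^ 2 <= L a ^ 2.

Definition is_glb (S : R -> Prop) (x : R) : Prop :=
  (forall y, S y -> x <= y) /\ (forall z, (forall y, S y -> z <= y) -> z <= x).

Definition hol_metric {n} (N : vec n -> R) (H : (vec n -> vec n) -> Prop)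
  (L : (vec n -> vec n) -> R) (u v : vec n) : R :=
  epsilon (inhabits 0)
    (is_glb (fun y => exists a, H a /\ y = sqrt (L a ^ 2 + N (vsub (a u) v) ^ 2))).

Definition semi_metric {n} (rho : vec n -> vec n -> R) : Prop :=
  (forall u v, 0 <= rho u v) /\
  (forall u v, rho u v = rho v u) /\
  (forall u, rho u u = 0) /\
  (forall u v w, rho u w <= rho u v + rho v w).

(* Every holonomic metric d_L is a semi-metric with d_L(u,v) <= ||u - v|| (take a = id,
   where L vanishes), hence 1-Lipschitz in each argument. This is an Arzela-Ascoli situation:
   a diagonal extraction makes the d_{L_i} converge on the countable dense set of pairs
   of rational vectors, equicontinuity extends the convergence to all pairs, and the limit
   is again a semi-metric dominated by the norm. Uniform convergence on bounded sets then
   follows by contradiction, because in finite dimension a norm-bounded sequence is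
   coordinatewise bounded and so has a norm-convergent subsequence. *)

From Pilot Require Import Defs.
From Stdlib Require Import Reals Lra Lia Classical ClassicalEpsilon
  FunctionalExtensionality Arith Cantor.
Open Scope R_scope.

Lemma Rabs_le_inv a b : Rabs a <= b -> - b <= a <= b.
Proof. unfold Rabs; destruct (Rcase_abs a); intros; lra. Qed.

Lemma Un_cv_const c : Un_cv (fun _ : nat => c) c.
Proof.
  intros eps Heps; exists O; intros k _.
  unfold Rdist; rewrite Rminus_diag, Rabs_R0; exact Heps.
Qed.

Lemma inv_INR_S_eventually_lt eps :
  0 < eps -> exists K, forall k, (K <= k)%nat -> / (INR k + 1) < eps.
Proof.
  intros Heps. destruct (archimed (/ eps)) as [Hup _].
  assert (Hinv : 0 < / eps) by (apply Rinv_0_lt_compat; lra).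
  destruct (IZN (up (/ eps))) as [m Hm]; [apply le_IZR; lra|].
  exists m; intros k Hk. rewrite Hm, <- INR_IZR_INZ in Hup. apply le_INR in Hk.
  rewrite <- (Rinv_inv eps). apply Rinv_lt_contravar; nra.
Qed.

Definition strictly_increasing (phi : nat -> nat) : Prop :=
  forall k, (phi k < phi (S k))%nat.

Lemma strictly_increasing_lt phi :
  strictly_increasing phi -> forall a b, (a < b)%nat -> (phi a < phi b)%nat.
Proof.
  intros Hphi a b Hab; induction Hab as [|b _ IH].
  - apply Hphi.
  - specialize (Hphi b); lia.
Qed.

Lemma strictly_increasing_id_le phi :
  strictly_increasing phi -> forall k, (k <= phi k)%nat.
Proof. intros Hphi k; induction k as [|k IH]; [lia|]. specialize (Hphi k); lia. Qed.

Lemma strictly_increasing_comp f g :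
  strictly_increasing f -> strictly_increasing g ->
  strictly_increasing (fun k => f (g k)).
Proof. intros Hf Hg k; apply strictly_increasing_lt; auto. Qed.

Lemma Un_cv_subseq u l phi :
  Un_cv u l -> strictly_increasing phi -> Un_cv (fun k => u (phi k)) l.
Proof.
  intros Hu Hphi eps Heps; destruct (Hu eps Heps) as [K HK]; exists K.
  intros k Hk; apply HK. pose proof (strictly_increasing_id_le phi Hphi k); lia.
Qed.

Lemma ValAdh_subseq_cv (u : nat -> R) l :
  ValAdh u l -> exists phi, strictly_increasing phi /\ Un_cv (fun k => u (phi k)) l.
Proof.
  intros Hl.
  destruct (choice (fun (mk : nat * nat) p =>
              (fst mk <= p)%nat /\ Rabs (u p - l) < / (INR (snd mk) + 1)))
    as [next Hnext].
  { intros [m k].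
    assert (Hr : 0 < / (INR k + 1)) by (apply Rinv_0_lt_compat; pose proof (pos_INR k); lra).
    destruct (Hl (disc l (mkposreal _ Hr)) m) as [p Hp]; [|exists p; exact Hp].
    exists (mkposreal _ Hr); intros y Hy; exact Hy. }
  set (phi := fix f k := match k with
              | O => next (O, O)
              | S k' => next (S (f k'), S k') end).
  exists phi; split.
  - intros k. exact (proj1 (Hnext (S (phi k), S k))).
  - intros eps Heps. destruct (inv_INR_S_eventually_lt eps Heps) as [K HK].
    exists K; intros k Hk. unfold Rdist. apply Rlt_trans with (/ (INR k + 1)); auto.
    destruct k as [|k]; [exact (proj2 (Hnext (O, O)))|exact (proj2 (Hnext (S (phi k), S k)))].
Qed.

Lemma bounded_subseq_cv (u : nat -> R) M :
  (forall k, Rabs (u k) <= M) ->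
  exists phi l, strictly_increasing phi /\ Un_cv (fun k => u (phi k)) l.
Proof.
  intros Hu.
  destruct (Bolzano_Weierstrass u (fun c => - M <= c <= M) (compact_P3 (- M) M))
    as [l Hl]; [intros k; apply Rabs_le_inv, Hu|].
  destruct (ValAdh_subseq_cv u l Hl) as [phi Hphi]; eauto.
Qed.

Lemma nested_subseq_tail (Psi : nat -> nat -> nat) :
  (forall j, exists g, strictly_increasing g /\ forall k, Psi (S j) k = Psi j (g k)) ->
  forall j k, (j <= k)%nat -> forall m, exists t, (m <= t)%nat /\ Psi k m = Psi j t.
Proof.
  intros Hnest j k Hjk; induction Hjk as [|k Hjk IH]; intros m.
  - exists m; split; auto.
  - destruct (Hnest k) as [g [Hg Hk]]. destruct (IH (g m)) as [t [Ht Heq]].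
    exists t; split.
    + pose proof (strictly_increasing_id_le g Hg m); lia.
    + rewrite Hk; exact Heq.
Qed.

Lemma diagonal_subseq_cv (x : nat -> nat -> R) (M : nat -> R) :
  (forall j i, Rabs (x j i) <= M j) ->
  exists phi, strictly_increasing phi /\
    forall j, exists l, Un_cv (fun k => x j (phi k)) l.
Proof.
  intros Hx.
  destruct (choice (fun (jpsi : nat * (nat -> nat)) g => strictly_increasing g /\
              exists l, Un_cv (fun k => x (fst jpsi) (snd jpsi (g k))) l))
    as [refine Hrefine].
  { intros [j psi]. destruct (bounded_subseq_cv (fun k => x j (psi k)) (M j))
      as [g [l [Hg Hl]]]; [intros k; apply Hx|]. exists g; split; eauto. }
  set (Psi := fix P j := match j with
              | O => refine (O, fun k => k)
              | S j' => fun k => P j' (refine (S j', P j') k) end).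
  assert (HPsi : forall j, strictly_increasing (Psi j) /\
                   exists l, Un_cv (fun k => x j (Psi j k)) l).
  { induction j as [|j [IHinc _]].
    - exact (Hrefine (O, fun k => k)).
    - destruct (Hrefine (S j, Psi j)) as [Hg Hl].
      split; [exact (strictly_increasing_comp _ _ IHinc Hg) | exact Hl]. }
  assert (Hnest : forall j, exists g, strictly_increasing g /\
                    forall k, Psi (S j) k = Psi j (g k)).
  { intros j; exists (refine (S j, Psi j)); split; [apply Hrefine | reflexivity]. }
  exists (fun k => Psi k k); split.
  - intros k. destruct (Hrefine (S k, Psi k)) as [Hg _].
    change (Psi k k < Psi k (refine (S k, Psi k) (S k)))%nat.
    apply strictly_increasing_lt; [apply HPsi|].
    pose proof (strictly_increasing_id_le _ Hg (S k)); lia.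
  - intros j. destruct (HPsi j) as [_ [l Hl]]. exists l.
    intros eps Heps. destruct (Hl eps Heps) as [K HK]. exists (max K j). intros k Hk.
    destruct (nested_subseq_tail Psi Hnest j k ltac:(lia) k) as [t [Ht ->]].
    apply HK; lia.
Qed.
Lemma vec_ext {n} (u v : vec n) : (forall i, u i = v i) -> u = v.
Proof. intros; apply functional_extensionality; auto. Qed.

Lemma sig_lt_eq {n} (i : {i : nat | (i < n)%nat}) m (Hm : (m < n)%nat) :
  proj1_sig i = m -> i = exist _ m Hm.
Proof. destruct i as [k Hk]; simpl; intros ->; f_equal; apply Peano_dec.le_unique. Qed.

Lemma linear_sub {n} (a : vec n -> vec n) x y :
  is_linear a -> a (vsub x y) = vsub (a x) (a y).
Proof.
  intros [Hadd Hscale].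
  assert (Hxy : vsub x y = vadd x (vscale (-1) y))
    by (apply vec_ext; intros; unfold vsub, vadd, vscale; ring).
  rewrite Hxy, Hadd, Hscale. apply vec_ext; intros; unfold vsub, vadd, vscale; ring.
Qed.

Lemma in_O_norm_sub {n} (N : vec n -> R) a x y :
  in_O N a -> N (vsub (a x) (a y)) = N (vsub x y).
Proof. intros [Hlin Hnorm]; rewrite <- linear_sub; auto. Qed.

Lemma eventually_forall_index {n} (P : {i : nat | (i < n)%nat} -> nat -> Prop) :
  (forall i, exists K, forall k, (K <= k)%nat -> P i k) ->
  exists K, forall k, (K <= k)%nat -> forall i, P i k.
Proof.
  intros HP.
  assert (Hm : forall m, exists K, forall k, (K <= k)%nat ->
                 forall i, (proj1_sig i < m)%nat -> P i k).
  { induction m as [|m [K1 HK1]]; [exists O; intros; lia|].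
    destruct (lt_dec m n) as [Hmn|Hmn].
    - destruct (HP (exist _ m Hmn)) as [K2 HK2]. exists (max K1 K2).
      intros k Hk i Hi. destruct (Nat.eq_dec (proj1_sig i) m) as [Heq|Hne].
      + rewrite (sig_lt_eq i m Hmn Heq). apply HK2; lia.
      + apply HK1; lia.
    - exists K1. intros k Hk [i Hi] Him. apply HK1; simpl in *; lia. }
  destruct (Hm n) as [K HK]. exists K. intros k Hk [i Hi]. apply HK; simpl; auto.
Qed.

Lemma bounded_vec_subseq_cv {n} (s : nat -> vec n) M :
  (forall k i, Rabs (s k i) <= M) ->
  exists phi w, strictly_increasing phi /\ forall i, Un_cv (fun k => s (phi k) i) (w i).
Proof.
  intros Hs.
  assert (Hm : forall m, exists phi, strictly_increasing phi /\
            forall i, (proj1_sig i < m)%nat -> exists l, Un_cv (fun k => s (phi k) i) l).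
  { induction m as [|m [phi [Hphi Hcv]]].
    - exists (fun k => k); split; [intros k; lia | intros; lia].
    - destruct (lt_dec m n) as [Hmn|Hmn].
      + destruct (bounded_subseq_cv (fun k => s (phi k) (exist _ m Hmn)) M)
          as [psi [l [Hpsi Hl]]]; auto.
        exists (fun k => phi (psi k)); split; [apply strictly_increasing_comp; auto|].
        intros i Hi. destruct (Nat.eq_dec (proj1_sig i) m) as [Heq|Hne].
        * rewrite (sig_lt_eq i m Hmn Heq); eauto.
        * destruct (Hcv i ltac:(lia)) as [l' Hl'].
          exists l'; exact (Un_cv_subseq _ _ _ Hl' Hpsi).
      + exists phi; split; auto. intros [i Hi] Him; apply Hcv; simpl in *; lia. }
  destruct (Hm n) as [phi [Hphi Hcv]]. exists phi.
  exists (fun i => epsilon (inhabits 0) (fun l => Un_cv (fun k => s (phi k) i) l)).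
  split; auto. intros [i Hi]. apply epsilon_spec, Hcv; simpl; auto.
Qed.

Lemma coord_argmax {n} (x : vec n) (i0 : {i : nat | (i < n)%nat}) :
  exists j, forall i, Rabs (x i) <= Rabs (x j).
Proof.
  assert (Hm : forall m, exists j, forall i, (proj1_sig i < m)%nat -> Rabs (x i) <= Rabs (x j)).
  { induction m as [|m [j Hj]]; [exists i0; intros; lia|].
    destruct (lt_dec m n) as [Hmn|Hmn].
    - set (im := exist (fun i => (i < n)%nat) m Hmn).
      destruct (Rle_dec (Rabs (x j)) (Rabs (x im))) as [Hle|Hlt];
        [exists im | exists j]; intros i Hi;
        (destruct (Nat.eq_dec (proj1_sig i) m) as [Heq|Hne];
         [rewrite (sig_lt_eq i m Hmn Heq); fold im; lra | pose proof (Hj i ltac:(lia)); lra]).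
    - exists j. intros [i Hi] Him. apply Hj; simpl in *; lia. }
  destruct (Hm n) as [j Hj]. exists j. intros [i Hi]. apply Hj; simpl; auto.
Qed.

Definition norm_cv {n} (N : vec n -> R) (s : nat -> vec n) (w : vec n) : Prop :=
  forall eps, 0 < eps -> exists K, forall k, (K <= k)%nat -> N (vsub (s k) w) < eps.

Lemma norm_cv_subseq {n} (N : vec n -> R) s w phi :
  norm_cv N s w -> strictly_increasing phi -> norm_cv N (fun k => s (phi k)) w.
Proof.
  intros Hs Hphi eps Heps; destruct (Hs eps Heps) as [K HK]; exists K.
  intros k Hk; apply HK. pose proof (strictly_increasing_id_le phi Hphi k); lia.
Qed.

Definition std_basis {n} (m : nat) : vec n :=
  fun i => if Nat.eq_dec (proj1_sig i) m then 1 else 0.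

Definition truncate {n} (m : nat) (x : vec n) : vec n :=
  fun i => if lt_dec (proj1_sig i) m then x i else 0.

(* Through Cantor unpairing, k encodes ((p, q), m) and is sent to (p - q) / (m + 1),
   so every rational number is hit. *)
Definition rat_seq (k : nat) : R :=
  let num := fst (of_nat (fst (of_nat k))) in
  let den := snd (of_nat (fst (of_nat k))) in
  (INR num - INR den) / INR (S (snd (of_nat k))).

Lemma rat_seq_dense x d : 0 < d -> exists k, Rabs (rat_seq k - x) < d.
Proof.
  intros Hd. destruct (inv_INR_S_eventually_lt d Hd) as [m Hm]. specialize (Hm m (le_n m)).
  set (z := up (x * (INR m + 1))).
  destruct (archimed (x * (INR m + 1))) as [Hz1 Hz2]; fold z in Hz1, Hz2.
  exists (to_nat (to_nat (Z.to_nat z, Z.to_nat (- z)), m)).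
  unfold rat_seq; rewrite cancel_of_to; cbn [fst snd]; rewrite cancel_of_to; cbn [fst snd].
  replace (INR (Z.to_nat z) - INR (Z.to_nat (- z))) with (IZR z).
  2:{ rewrite !INR_IZR_INZ, <- minus_IZR; f_equal; lia. }
  rewrite S_INR. pose proof (pos_INR m).
  replace (IZR z / (INR m + 1) - x) with ((IZR z - x * (INR m + 1)) / (INR m + 1))
    by (field; lra).
  assert (Hpos : 0 < / (INR m + 1)) by (apply Rinv_0_lt_compat; lra).
  rewrite Rabs_right; [|apply Rle_ge; unfold Rdiv; apply Rmult_le_pos; lra].
  apply Rle_lt_trans with (1 / (INR m + 1)); [|lra].
  unfold Rdiv; apply Rmult_le_compat_r; lra.
Qed.

(* The k-th entry of the infinite sequence of naturals coded by j through iterated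
   Cantor unpairing. *)
Fixpoint tuple_decode (k j : nat) : nat :=
  match k with O => fst (of_nat j) | S k' => tuple_decode k' (snd (of_nat j)) end.

Lemma tuple_decode_surj m (t : nat -> nat) :
  exists j, forall k, (k < m)%nat -> tuple_decode k j = t k.
Proof.
  revert t; induction m as [|m IH]; intros t; [exists O; intros; lia|].
  destruct (IH (fun k => t (S k))) as [j Hj]. exists (to_nat (t O, j)).
  intros [|k] Hk; cbn [tuple_decode]; rewrite cancel_of_to; cbn [fst snd]; auto.
  apply Hj; lia.
Qed.

Definition dense_vec {n} (j : nat) : vec n := fun i => rat_seq (tuple_decode (proj1_sig i) j).

Lemma dense_vec_coord_approx {n} (v : vec n) d :
  0 < d -> exists j, forall i, Rabs (dense_vec j i - v i) < d.
Proof.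
  intros Hd.
  set (vk := fun k => match lt_dec k n with left H => v (exist _ k H) | right _ => 0 end).
  destruct (choice (fun k t => Rabs (rat_seq t - vk k) < d)) as [t Ht];
    [intros; apply rat_seq_dense; auto|].
  destruct (tuple_decode_surj n t) as [j Hj]. exists j.
  intros [k Hk]; unfold dense_vec; simpl. rewrite Hj by auto.
  specialize (Ht k); unfold vk in Ht. destruct (lt_dec k n) as [Hk'|]; [|lia].
  rewrite (sig_lt_eq (exist _ k Hk') k Hk) in Ht; auto.
Qed.

Section NormedSpace.

Context {n : nat} (N : vec n -> R) (HN : is_norm N).

Lemma norm_scale c v : N (vscale c v) = Rabs c * N v.
Proof. apply HN. Qed.

Lemma norm_add u v : N (vadd u v) <= N u + N v.
Proof. apply HN. Qed.

Lemma norm_zero : N vzero = 0.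
Proof.
  assert (Hz : @vzero n = vscale 0 vzero) by (apply vec_ext; intros; unfold vscale, vzero; ring).
  rewrite Hz, norm_scale, Rabs_R0; ring.
Qed.

Lemma norm_nonneg v : 0 <= N v.
Proof.
  pose proof (norm_add v (vscale (-1) v)) as Hadd.
  assert (Hz : vadd v (vscale (-1) v) = vzero)
    by (apply vec_ext; intros; unfold vadd, vscale, vzero; ring).
  rewrite Hz, norm_zero, norm_scale, (Rabs_left (-1)) in Hadd by lra; lra.
Qed.

Lemma norm_sub_sym u v : N (vsub u v) = N (vsub v u).
Proof.
  assert (Huv : vsub u v = vscale (-1) (vsub v u))
    by (apply vec_ext; intros; unfold vsub, vscale; ring).
  rewrite Huv, norm_scale, (Rabs_left (-1)) by lra; ring.
Qed.

Lemma norm_sub_triangle u v w : N (vsub u w) <= N (vsub u v) + N (vsub v w).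
Proof.
  assert (Huw : vsub u w = vadd (vsub u v) (vsub v w))
    by (apply vec_ext; intros; unfold vsub, vadd; ring).
  rewrite Huw; apply norm_add.
Qed.

Lemma norm_sub_diag u : N (vsub u u) = 0.
Proof.
  assert (Hz : vsub u u = vzero) by (apply vec_ext; intros; unfold vsub, vzero; ring).
  rewrite Hz; apply norm_zero.
Qed.

Fixpoint basis_norm_sum (m : nat) : R :=
  match m with O => 0 | S m' => basis_norm_sum m' + N (std_basis m') end.

Lemma norm_truncate_le x d : 0 <= d -> (forall i, Rabs (x i) <= d) ->
  forall m, N (truncate m x) <= d * basis_norm_sum m.
Proof.
  intros Hd Hx; induction m as [|m IH]; simpl.
  - assert (Hz : truncate 0 x = vzero).
    { apply vec_ext; intros i; unfold truncate, vzero; destruct (lt_dec _ 0); [lia|auto]. }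
    rewrite Hz, norm_zero; lra.
  - pose proof (norm_nonneg (std_basis m)).
    destruct (lt_dec m n) as [Hmn|Hmn].
    + assert (Hsplit : truncate (S m) x =
                vadd (truncate m x) (vscale (x (exist _ m Hmn)) (std_basis m))).
      { apply vec_ext; intros i; unfold truncate, vadd, vscale, std_basis.
        destruct (lt_dec (proj1_sig i) (S m)), (lt_dec (proj1_sig i) m),
          (Nat.eq_dec (proj1_sig i) m) as [Heq|]; try lia; try ring.
        rewrite (sig_lt_eq i m Hmn Heq); ring. }
      rewrite Hsplit. eapply Rle_trans; [apply norm_add|]. rewrite norm_scale.
      pose proof (Hx (exist _ m Hmn)). nra.
    + assert (Hsame : truncate (S m) x = truncate m x).
      { apply vec_ext; intros [k Hk]; unfold truncate; simpl.
        destruct (lt_dec k (S m)), (lt_dec k m); try lia; auto. }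
      rewrite Hsame; nra.
Qed.

Lemma basis_norm_sum_nonneg m : 0 <= basis_norm_sum m.
Proof.
  induction m as [|m IH]; simpl; [lra|]. pose proof (norm_nonneg (std_basis m)); lra.
Qed.

Lemma norm_le_coord_bound :
  exists C, 0 <= C /\ forall x d, 0 <= d -> (forall i, Rabs (x i) <= d) -> N x <= d * C.
Proof.
  exists (basis_norm_sum n); split; [apply basis_norm_sum_nonneg|].
  intros x d Hd Hx.
  assert (Hfull : truncate n x = x).
  { apply vec_ext; intros [k Hk]; unfold truncate; simpl; destruct (lt_dec k n); auto; lia. }
  rewrite <- Hfull; apply norm_truncate_le; auto.
Qed.

Lemma norm_lt_of_coords_lt eps : 0 < eps ->
  exists d, 0 < d /\ forall x, (forall i, Rabs (x i) < d) -> N x < eps.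
Proof.
  intros Heps. destruct norm_le_coord_bound as [C [HC HCx]].
  assert (Hd : 0 < eps / (C + 1)) by (apply Rdiv_lt_0_compat; lra).
  exists (eps / (C + 1)); split; auto. intros x Hx.
  eapply Rle_lt_trans; [apply (HCx x (eps / (C + 1))); [lra | intros i; left; apply Hx]|].
  replace (eps / (C + 1) * C) with (eps - eps / (C + 1)) by (field; lra); lra.
Qed.

Lemma coord_cv_norm_cv s w :
  (forall i, Un_cv (fun k => s k i) (w i)) -> norm_cv N s w.
Proof.
  intros Hcv eps Heps. destruct (norm_lt_of_coords_lt eps Heps) as [d [Hd Hsmall]].
  destruct (eventually_forall_index (fun i k => Rabs (s k i - w i) < d)) as [K HK].
  { intros i; destruct (Hcv i d Hd) as [K HK]; exists K; intros k Hk; exact (HK k Hk). }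
  exists K; intros k Hk; apply Hsmall; intros i; apply HK; auto.
Qed.

Lemma no_null_seq_on_coord_sphere (w : nat -> vec n) (j : nat -> {i : nat | (i < n)%nat}) :
  (forall k i, Rabs (w k i) <= 1) -> (forall k, Rabs (w k (j k)) = 1) ->
  ~ (forall k, N (w k) < / (INR k + 1)).
Proof.
  intros Hw1 Hwj Hsmall.
  destruct (bounded_vec_subseq_cv w 1 Hw1) as [psi [ws [Hpsi Hws]]].
  assert (Hzero : ws = vzero).
  { apply HN. apply Rle_antisym; [|apply norm_nonneg]. apply Rle_plus_epsilon; intros eps Heps.
    destruct (coord_cv_norm_cv (fun k => w (psi k)) ws Hws (eps / 2)) as [K1 HK1]; [lra|].
    destruct (inv_INR_S_eventually_lt (eps / 2)) as [K2 HK2]; [lra|].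
    set (k := max K1 K2).
    pose proof (strictly_increasing_id_le psi Hpsi k) as Hk.
    pose proof (HK1 k ltac:(lia)) as Hnear; cbn beta in Hnear.
    pose proof (Hsmall (psi k)) as Hwk. pose proof (HK2 (psi k) ltac:(lia)) as Hinv.
    pose proof (norm_sub_triangle ws (w (psi k)) vzero) as Htri.
    assert (Hsub : forall v : vec n, vsub v vzero = v)
      by (intros; apply vec_ext; intros; unfold vsub, vzero; ring).
    rewrite !Hsub, norm_sub_sym in Htri; lra. }
  destruct (eventually_forall_index (fun i k => Rabs (w (psi k) i - ws i) < / 2)) as [K HK].
  { intros i; destruct (Hws i (/ 2)) as [K HK]; [lra|]. exists K; intros k Hk; exact (HK k Hk). }
  specialize (HK K (le_n K) (j (psi K))).
  rewrite Hzero in HK; unfold vzero in HK; rewrite Rminus_0_r, Hwj in HK; lra.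
Qed.

Lemma coord_le_norm : exists C, 0 <= C /\ forall x i, Rabs (x i) <= C * N x.
Proof.
  apply NNPP; intros Hnot.
  assert (Hbad : forall k : nat, exists p : vec n * {i : nat | (i < n)%nat},
             (INR k + 1) * N (fst p) < Rabs (fst p (snd p))).
  { intros k; apply NNPP; intros Hk; apply Hnot.
    exists (INR k + 1); split; [pose proof (pos_INR k); lra|].
    intros x i; apply Rnot_lt_le; intros Hlt; apply Hk; exists (x, i); auto. }
  destruct (choice _ Hbad) as [p Hp].
  destruct (choice (fun k j => forall i, Rabs (fst (p k) i) <= Rabs (fst (p k) j)))
    as [jmax Hjmax]; [intros k; apply coord_argmax, (snd (p k))|].
  set (m := fun k => Rabs (fst (p k) (jmax k))).
  assert (Hm : forall k, 0 < m k).
  { intros k. pose proof (Hp k). pose proof (Hjmax k (snd (p k))).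
    pose proof (norm_nonneg (fst (p k))). pose proof (pos_INR k). unfold m; nra. }
  apply (no_null_seq_on_coord_sphere (fun k => vscale (/ m k) (fst (p k))) jmax).
  - intros k i; unfold vscale; rewrite Rabs_mult, Rabs_inv, Rabs_pos_eq by (left; apply Hm).
    apply Rmult_le_reg_l with (m k); [apply Hm|].
    rewrite <- Rmult_assoc, Rinv_r, Rmult_1_l, Rmult_1_r by (apply Rgt_not_eq, Hm).
    apply Hjmax.
  - intros k; unfold vscale; rewrite Rabs_mult, Rabs_inv, Rabs_pos_eq by (left; apply Hm).
    apply Rinv_l, Rgt_not_eq, Hm.
  - intros k; rewrite norm_scale, Rabs_inv, Rabs_pos_eq by (left; apply Hm).
    pose proof (Hp k). pose proof (Hjmax k (snd (p k))). pose proof (Hm k). pose proof (pos_INR k).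
    apply Rmult_lt_reg_l with (m k * (INR k + 1)); [nra|].
    replace (m k * (INR k + 1) * (/ m k * N (fst (p k)))) with ((INR k + 1) * N (fst (p k)))
      by (field; lra).
    replace (m k * (INR k + 1) * / (INR k + 1)) with (m k) by (field; lra).
    unfold m; lra.
Qed.

Lemma norm_bounded_subseq_norm_cv (s : nat -> vec n) r :
  (forall k, N (s k) <= r) ->
  exists phi w, strictly_increasing phi /\ norm_cv N (fun k => s (phi k)) w.
Proof.
  intros Hs. destruct coord_le_norm as [C [HC HCx]].
  destruct (bounded_vec_subseq_cv s (C * r)) as [phi [w [Hphi Hw]]].
  { intros k i; eapply Rle_trans; [apply HCx|]. apply Rmult_le_compat_l; auto. }
  exists phi, w; split; auto. apply coord_cv_norm_cv; auto.
Qed.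

Lemma dense_vec_approx (v : vec n) eps : 0 < eps -> exists j, N (vsub (dense_vec j) v) < eps.
Proof.
  intros Heps. destruct (norm_lt_of_coords_lt eps Heps) as [d [Hd Hsmall]].
  destruct (dense_vec_coord_approx v d Hd) as [j Hj]. exists j; apply Hsmall; exact Hj.
Qed.

End NormedSpace.

Lemma is_glb_exists (S : R -> Prop) :
  (exists y, S y) -> (forall y, S y -> 0 <= y) -> exists x, is_glb S x.
Proof.
  intros [y0 Hy0] Hpos.
  destruct (completeness (fun z => S (- z))) as [m [Hub Hlub]].
  - exists 0; intros z Hz; apply Hpos in Hz; lra.
  - exists (- y0); rewrite Ropp_involutive; auto.
  - exists (- m); split.
    + intros y Hy. assert (- y <= m) by (apply Hub; rewrite Ropp_involutive; auto); lra.
    + intros z Hz. assert (m <= - z) by (apply Hlub; intros w Hw; apply Hz in Hw; lra); lra.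
Qed.

Lemma sqrt_sum_sq_triangle A B x1 y1 x2 y2 :
  0 <= A -> A <= x1 + x2 -> 0 <= B -> B <= y1 + y2 ->
  0 <= x1 -> 0 <= y1 -> 0 <= x2 -> 0 <= y2 ->
  sqrt (A ^ 2 + B ^ 2) <= sqrt (x1 ^ 2 + y1 ^ 2) + sqrt (x2 ^ 2 + y2 ^ 2).
Proof.
  intros.
  set (s1 := sqrt (x1 ^ 2 + y1 ^ 2)); set (s2 := sqrt (x2 ^ 2 + y2 ^ 2)).
  assert (E1 : s1 * s1 = x1 ^ 2 + y1 ^ 2) by (apply sqrt_sqrt; nra).
  assert (E2 : s2 * s2 = x2 ^ 2 + y2 ^ 2) by (apply sqrt_sqrt; nra).
  assert (P1 : 0 <= s1) by apply sqrt_pos. assert (P2 : 0 <= s2) by apply sqrt_pos.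
  (* Cauchy-Schwarz in the plane *)
  assert (Hcs : x1 * x2 + y1 * y2 <= s1 * s2).
  { assert ((x1 * x2 + y1 * y2) ^ 2 <= (s1 * s2) ^ 2).
    { replace ((s1 * s2) ^ 2) with ((s1 * s1) * (s2 * s2)) by ring.
      rewrite E1, E2. pose proof (pow2_ge_0 (x1 * y2 - x2 * y1)). nra. }
    assert (0 <= s1 * s2) by nra. nra. }
  rewrite <- (sqrt_pow2 (s1 + s2)) by lra.
  apply sqrt_le_1_alt; nra.
Qed.

Section HolonomicMetric.

Context {n : nat} (N : vec n -> R) (H : (vec n -> vec n) -> Prop)
  (L : (vec n -> vec n) -> R) (Hhol : holonomic N H L).

Let d := hol_metric N H L.

Lemma hol_metric_is_glb u v :
  is_glb (fun y => exists a, H a /\ y = sqrt (L a ^ 2 + N (vsub (a u) v) ^ 2)) (d u v).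
Proof.
  destruct Hhol as [_ [[_ [Hid _]] _]]. unfold d, hol_metric. apply epsilon_spec, is_glb_exists.
  - exists (sqrt (L idf ^ 2 + N (vsub (idf u) v) ^ 2)); exists idf; auto.
  - intros y [a [_ ->]]; apply sqrt_pos.
Qed.

Lemma hol_metric_le u v a : H a -> d u v <= sqrt (L a ^ 2 + N (vsub (a u) v) ^ 2).
Proof. intros Ha; apply (proj1 (hol_metric_is_glb u v)); exists a; auto. Qed.

Lemma hol_metric_approx u v eps : 0 < eps ->
  exists a, H a /\ sqrt (L a ^ 2 + N (vsub (a u) v) ^ 2) < d u v + eps.
Proof.
  intros Heps. apply NNPP; intros Hnot.
  assert (d u v + eps <= d u v); [|lra].
  apply (proj2 (hol_metric_is_glb u v)). intros y [a [Ha ->]].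
  apply Rnot_lt_le; intros Hlt; apply Hnot; eauto.
Qed.

Lemma hol_metric_nonneg u v : 0 <= d u v.
Proof. apply (proj2 (hol_metric_is_glb u v)). intros y [a [_ ->]]; apply sqrt_pos. Qed.

Lemma hol_metric_le_norm u v : d u v <= N (vsub u v).
Proof.
  destruct Hhol as [HN [[_ [Hid _]] [[_ [HL0 _]] _]]].
  eapply Rle_trans; [apply (hol_metric_le u v idf Hid)|].
  rewrite (proj2 (HL0 idf Hid) eq_refl). unfold idf.
  replace (0 ^ 2 + N (vsub u v) ^ 2) with (N (vsub u v) ^ 2) by ring.
  rewrite sqrt_pow2; [lra | apply norm_nonneg; auto].
Qed.

Lemma hol_metric_sym_le u v : d v u <= d u v.
Proof.
  destruct Hhol as [HN [[HO [_ [_ Hinv]]] [[_ [_ [HLinv _]]] _]]].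
  apply Rle_plus_epsilon; intros eps Heps.
  destruct (hol_metric_approx u v eps Heps) as [a [Ha Hlt]].
  destruct (Hinv a Ha) as [b [Hb [Hab Hba]]].
  eapply Rle_trans; [apply (hol_metric_le v u b Hb)|].
  rewrite (HLinv a b Ha Hb Hab Hba).
  (* b inverts a, so ||b v - u|| = ||b v - b (a u)|| = ||v - a u|| *)
  replace (N (vsub (b v) u)) with (N (vsub (a u) v)); [lra|].
  replace u with (b (a u)) at 2 by (change (Defs.comp b a u = u); rewrite Hba; reflexivity).
  rewrite in_O_norm_sub by auto. apply norm_sub_sym; auto.
Qed.

Lemma hol_metric_triangle u v w : d u w <= d u v + d v w.
Proof.
  destruct Hhol as [HN [[HO [_ [Hcomp _]]] [[HL0 [_ [_ HLtri]]] _]]].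
  apply Rle_plus_epsilon; intros eps Heps.
  destruct (hol_metric_approx u v (eps / 2)) as [b [Hb Hltb]]; [lra|].
  destruct (hol_metric_approx v w (eps / 2)) as [a [Ha Hlta]]; [lra|].
  assert (Hab : N (vsub (Defs.comp a b u) w) <= N (vsub (b u) v) + N (vsub (a v) w)).
  { unfold Defs.comp. rewrite <- (in_O_norm_sub N a (b u) v) by auto.
    apply norm_sub_triangle; auto. }
  assert (Hsq : sqrt (L (Defs.comp a b) ^ 2 + N (vsub (Defs.comp a b u) w) ^ 2) <=
                sqrt (L b ^ 2 + N (vsub (b u) v) ^ 2) + sqrt (L a ^ 2 + N (vsub (a v) w) ^ 2)).
  { pose proof (HLtri a b Ha Hb).
    apply sqrt_sum_sq_triangle; auto using norm_nonneg; lra. }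
  pose proof (hol_metric_le u w (Defs.comp a b) (Hcomp a b Ha Hb)); lra.
Qed.

Lemma hol_metric_semi_metric : semi_metric d.
Proof.
  split; [|split; [|split]].
  - apply hol_metric_nonneg.
  - intros u v; apply Rle_antisym; apply hol_metric_sym_le.
  - intros u; pose proof (hol_metric_le_norm u u) as Hle; pose proof (hol_metric_nonneg u u).
    rewrite (norm_sub_diag N (proj1 Hhol)) in Hle; lra.
  - apply hol_metric_triangle.
Qed.

End HolonomicMetric.

Section DominatedSemiMetrics.

Context {n : nat} (N : vec n -> R) (HN : is_norm N).

Definition norm_dominated (d : vec n -> vec n -> R) : Prop :=
  forall u v, d u v <= N (vsub u v).

Definition norm_lipschitz (f : vec n -> vec n -> R) : Prop :=
  forall u v u' v', Rabs (f u v - f u' v') <= N (vsub u u') + N (vsub v v').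

Lemma dominated_semi_metric_lipschitz d :
  semi_metric d -> norm_dominated d -> norm_lipschitz d.
Proof.
  intros [_ [Hsym [_ Htri]]] Hdom u v u' v'.
  pose proof (Htri u u' v). pose proof (Htri u' v' v). pose proof (Htri u' u v').
  pose proof (Htri u v v'). pose proof (Hdom u u'). pose proof (Hdom u' u).
  pose proof (Hdom v v'). pose proof (Hdom v' v).
  rewrite (norm_sub_sym N HN u' u), (norm_sub_sym N HN v' v) in *.
  pose proof (Hsym u' u). pose proof (Hsym v' v).
  apply Rabs_le; lra.
Qed.

Lemma dominated_semi_metrics_subseq_pointwise_cv (d : nat -> vec n -> vec n -> R) :
  (forall i, semi_metric (d i)) -> (forall i, norm_dominated (d i)) ->
  exists phi rho, strictly_increasing phi /\
    forall u v, Un_cv (fun k => d (phi k) u v) (rho u v).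
Proof.
  intros Hsm Hdom.
  set (x := fun j i => d i (dense_vec (fst (of_nat j))) (dense_vec (snd (of_nat j)))).
  destruct (diagonal_subseq_cv x
              (fun j => N (vsub (dense_vec (fst (of_nat j))) (dense_vec (snd (of_nat j))))))
    as [phi [Hphi Hx]].
  { intros j i; unfold x; rewrite Rabs_right; [apply Hdom | apply Rle_ge, Hsm]. }
  (* convergence on the dense pairs propagates to all pairs by equicontinuity *)
  assert (Hcauchy : forall u v, Cauchy_crit (fun k => d (phi k) u v)).
  { intros u v eps Heps.
    destruct (dense_vec_approx N HN u (eps / 5)) as [a Ha]; [lra|].
    destruct (dense_vec_approx N HN v (eps / 5)) as [b Hb]; [lra|].
    destruct (Hx (to_nat (a, b))) as [l Hl].
    destruct (CV_Cauchy _ (exist _ l Hl) (eps / 5)) as [K HK]; [lra|].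
    exists K; intros k m Hk Hm. specialize (HK k m Hk Hm).
    unfold x, Rdist in HK; rewrite cancel_of_to in HK; cbn [fst snd] in HK.
    pose proof (dominated_semi_metric_lipschitz _ (Hsm (phi k)) (Hdom (phi k))
                  u v (dense_vec a) (dense_vec b)) as Hk'.
    pose proof (dominated_semi_metric_lipschitz _ (Hsm (phi m)) (Hdom (phi m))
                  u v (dense_vec a) (dense_vec b)) as Hm'.
    rewrite (norm_sub_sym N HN u), (norm_sub_sym N HN v) in Hk', Hm'.
    apply Rabs_def2 in HK; apply Rabs_le_inv in Hk'; apply Rabs_le_inv in Hm'.
    unfold Rdist; apply Rabs_def1; lra. }
  exists phi, (fun u v => proj1_sig (R_complete _ (Hcauchy u v))); split; auto.
  intros u v; exact (proj2_sig (R_complete _ (Hcauchy u v))).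
Qed.

Lemma pointwise_limit_dominated_semi_metric (d : nat -> vec n -> vec n -> R) rho :
  (forall k, semi_metric (d k)) -> (forall k, norm_dominated (d k)) ->
  (forall u v, Un_cv (fun k => d k u v) (rho u v)) ->
  semi_metric rho /\ norm_dominated rho.
Proof.
  intros Hsm Hdom Hcv. split; [split; [|split; [|split]]|].
  - intros u v; apply (Rle_cv_lim (Un := fun _ => 0) (Vn := fun k => d k u v)); auto using Un_cv_const.
    intros k; apply Hsm.
  - intros u v; apply (UL_sequence (fun k => d k u v)); auto.
    replace (fun k => d k u v) with (fun k => d k v u); auto.
    apply functional_extensionality; intros k; apply Hsm.
  - intros u; apply (UL_sequence (fun k => d k u u)); auto.
    replace (fun k => d k u u) with (fun _ : nat => 0); [apply Un_cv_const|].
    apply functional_extensionality; intros k; symmetry; apply Hsm.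
  - intros u v w; apply (Rle_cv_lim (Un := fun k => d k u w) (Vn := fun k => d k u v + d k v w));
      [intros k; apply Hsm | auto | apply CV_plus; auto].
  - intros u v; apply (Rle_cv_lim (Un := fun k => d k u v) (Vn := fun _ => N (vsub u v)));
      [intros k; apply Hdom | auto | apply Un_cv_const].
Qed.

Lemma lipschitz_pointwise_cv_uniform_on_bounded (F : nat -> vec n -> vec n -> R) G r eps :
  (forall k, norm_lipschitz (F k)) -> norm_lipschitz G ->
  (forall u v, Un_cv (fun k => F k u v) (G u v)) -> 0 < eps ->
  exists K, forall k, (K <= k)%nat -> forall u v, N u <= r -> N v <= r ->
    Rabs (F k u v - G u v) < eps.
Proof.
  intros HF HG Hcv Heps. apply NNPP; intros Hnot.
  assert (Hbad : forall K, exists t : nat * (vec n * vec n),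
    (K <= fst t)%nat /\ N (fst (snd t)) <= r /\ N (snd (snd t)) <= r /\
    eps <= Rabs (F (fst t) (fst (snd t)) (snd (snd t)) - G (fst (snd t)) (snd (snd t)))).
  { intros K; apply NNPP; intros HK; apply Hnot; exists K; intros k Hk u v Hu Hv.
    apply Rnot_le_lt; intros Hle; apply HK; exists (k, (u, v)); auto. }
  destruct (choice _ Hbad) as [bad Hbad'].
  set (kk := fun m => fst (bad m)).
  set (uu := fun m => fst (snd (bad m))); set (vv := fun m => snd (snd (bad m))).
  destruct (norm_bounded_subseq_norm_cv N HN uu r) as [p1 [us [Hp1 Hus]]];
    [intros m; apply Hbad'|].
  destruct (norm_bounded_subseq_norm_cv N HN (fun m => vv (p1 m)) r) as [p2 [vs [Hp2 Hvs]]];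
    [intros m; apply Hbad'|].
  destruct (norm_cv_subseq N _ us p2 Hus Hp2 (eps / 6)) as [K1 HK1]; [lra|].
  destruct (Hvs (eps / 6)) as [K2 HK2]; [lra|].
  destruct (Hcv us vs (eps / 3)) as [K0 HK0]; [lra|].
  set (M := max K0 (max K1 K2)); set (m := p1 (p2 M)).
  pose proof (strictly_increasing_id_le _ (strictly_increasing_comp _ _ Hp1 Hp2) M).
  destruct (Hbad' m) as [Hkm [_ [_ Hfar]]].
  specialize (HK0 (kk m) ltac:(unfold kk, M in *; lia)); unfold Rdist in HK0.
  specialize (HK1 M ltac:(lia)); specialize (HK2 M ltac:(lia)); cbn beta in HK1, HK2.
  pose proof (HF (kk m) (uu m) (vv m) us vs) as HFm.
  pose proof (HG (uu m) (vv m) us vs) as HGm.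
  fold m in HK1, HK2.
  apply Rabs_le_inv in HFm; apply Rabs_le_inv in HGm; apply Rabs_def2 in HK0.
  assert (Rabs (F (kk m) (uu m) (vv m) - G (uu m) (vv m)) < eps) by (apply Rabs_def1; lra).
  unfold kk, uu, vv in *; lra.
Qed.

End DominatedSemiMetrics.

Theorem mainTheorem12 (n : nat) (N : vec n -> R)
  (H : nat -> (vec n -> vec n) -> Prop) (L : nat -> (vec n -> vec n) -> R) :
  is_norm N ->
  (forall i, holonomic N (H i) (L i)) ->
  exists (phi : nat -> nat) (rho : vec n -> vec n -> R),
    (forall k, (phi k < phi (S k))%nat) /\
    semi_metric rho /\
    forall B : vec n -> vec n -> Prop,
      (exists r, forall u v, B u v -> N u <= r /\ N v <= r) ->
      forall eps, 0 < eps ->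
        exists K, forall k, (K <= k)%nat -> forall u v, B u v ->
          Rabs (hol_metric N (H (phi k)) (L (phi k)) u v - rho u v) < eps.
Proof.
  intros HN Hhol.
  set (d := fun i => hol_metric N (H i) (L i)).
  assert (Hsm : forall i, semi_metric (d i)) by (intros i; apply hol_metric_semi_metric, Hhol).
  assert (Hdom : forall i, norm_dominated N (d i))
    by (intros i u v; apply hol_metric_le_norm, Hhol).
  destruct (dominated_semi_metrics_subseq_pointwise_cv N HN d Hsm Hdom)
    as [phi [rho [Hphi Hcv]]].
  destruct (pointwise_limit_dominated_semi_metric N (fun k => d (phi k)) rho
              (fun k => Hsm _) (fun k => Hdom _) Hcv) as [Hrho Hrho_dom].
  exists phi, rho; split; [exact Hphi|]; split; [exact Hrho|].
  intros B [r Hr] eps Heps.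
  destruct (lipschitz_pointwise_cv_uniform_on_bounded N HN (fun k => d (phi k)) rho r eps
              (fun k => dominated_semi_metric_lipschitz N HN _ (Hsm _) (Hdom _))
              (dominated_semi_metric_lipschitz N HN _ Hrho Hrho_dom) Hcv Heps) as [K HK].
  exists K; intros k Hk u v Huv; destruct (Hr u v Huv); apply HK; auto.
Qed.
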